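(* Let $0<\alpha\leq 1/2$ and let $\lambda_*(\alpha)$ be as defined below. There exists a non-trivial function $\omega=(\omega_1,\omega_2)$, with $\omega_1$ on $[0,2\pi]$ and $\omega_2$ on $[1,\infty)$, such that $$\left(-i\frac{d}{d\theta} -\alpha\right)^2\omega_1 = \lambda_*(\alpha)\, \omega_1 \text{ on } (0,2\pi),\qquad -\frac{d^2}{dr^2}\omega_2 = \frac{\lambda_*(\alpha)}{r^2}\,\omega_2 \text{ on } (1,\infty),$$ $$\omega_1(0)=\omega_1(2\pi)=\omega_2(1),\qquad \omega_1'(0)-\omega_1'(2\pi)+\omega_2'(1)=0,$$ and moreover: (1) if $0<\alpha<1/2$, then $\omega$ vanishes nowhere on $\Gamma$; if $\alpha=1/2$, then $\omega$ vanishes exactly at the point $(-1,0)\in\Gamma_1$ (i.e. $\theta=\pi$); (2) $\omega_2$ is real-valued, and the function $j:=\operatorname{Re}\overline{\omega_1}\left(-i\frac{d}{d\theta}-\alpha\right)\omega_1$ on $(0,2\pi)$ is constant, equal to $$j= - \sqrt{\lambda_*(\alpha)}\, \frac{\sin(2\pi\alpha)}{\sin(2\pi\sqrt{\lambda_*(\alpha)})};$$ (3) if $0<\alpha<1/2$, then $$\int_0^{2\pi} \frac{d\theta}{|\omega_1(\theta)|^2} = \frac{2\pi\alpha}{\sqrt{\lambda_*(\alpha)}}\, \frac{\sin(2\pi\sqrt{\lambda_*(\alpha)})}{\sin(2\pi\alpha)}.$$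
   Context: $\Gamma=\Gamma_1\cup\Gamma_2$ with $\Gamma_1$ the unit circle in $\mathbb{R}^2$ parametrized by $\theta\mapsto e^{i\theta}$, $\theta\in[0,2\pi]$, and $\Gamma_2=\{(r,0):r>1\}$ parametrized by $r$; $\omega_1,\omega_2$ are the restrictions of $\omega$ to $\Gamma_1,\Gamma_2$ in these parametrizations. For $0<\alpha\le1/2$, $\lambda_*(\alpha)$ is the unique solution $\lambda\in(0,\alpha^2)$ of $\cos(2\pi\alpha)=\cos(2\pi\sqrt\lambda)-\frac{1-\sqrt{1-4\lambda}}{4\sqrt\lambda}\sin(2\pi\sqrt\lambda)$. *)

From Stdlib Require Import Reals.
From Coquelicot Require Import Coquelicot.
Open Scope R_scope.

(* lambda is the number lambda_*(alpha): the (unique) solution in (0, alpha^2) of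
   cos(2 pi alpha) = cos(2 pi sqrt l) - (1 - sqrt(1-4 l))/(4 sqrt l) * sin(2 pi sqrt l). *)
Definition is_lambda_star (alpha l : R) : Prop :=
  0 < l < alpha ^ 2 /\
  cos (2 * PI * alpha) =
    cos (2 * PI * sqrt l)
    - (1 - sqrt (1 - 4 * l)) / (4 * sqrt l) * sin (2 * PI * sqrt l).

From Stdlib Require Import Reals Lra Psatz.
From Coquelicot Require Import Coquelicot.
Open Scope R_scope.

(* Write m = sqrt lambda, let f and g be the solutions of u'' = -m^2 u with
   f(0) = f(2 pi) = 1, g(0) = 1, g(2 pi) = -1, and take
     omega_1(theta) = e^{i alpha (theta - pi)} (cos(pi alpha) f(theta) + i sin(pi alpha) g(theta)),
     omega_2(r) = r^s,  where s = (1 - sqrt(1 - 4 lambda)) / 2 solves s (s - 1) = -lambda.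
   The phase turns (-i d/dtheta - alpha)^2 into -d^2/dtheta^2, so both equations hold, and
   omega_1(0) = omega_1(2 pi) = omega_2(1) = 1.  The derivative jump of omega_1 at the vertex is
   2 m (cos(2 pi alpha) - cos(2 pi m)) / sin(2 pi m), so Kirchhoff's condition is exactly the
   equation defining lambda_*.  The current is cos(pi alpha) sin(pi alpha) times the Wronskian
   W(f, g) = -2 m / sin(2 pi m).  Since |omega_1|^2 = cos^2(pi alpha) f^2 + sin^2(pi alpha) g^2
   with f > 0 on [0, 2 pi], omega_1 never vanishes for alpha < 1/2, while for alpha = 1/2 it
   vanishes exactly where g does, at theta = pi.  Finally 1/|omega_1|^2 is a constant multiple of
   the derivative of the phase arctan(tan(pi alpha) g / f), which runs from pi alpha down to
   -pi alpha; this gives the integral. *)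

Lemma is_derive_Cpair (x y : R -> R) t x' y' :
  is_derive x t x' -> is_derive y t y' ->
  is_derive (fun s => (x s, y s) : C) t (x', y').
Proof.
  intros Hx Hy.
  apply (filterdiff_comp'_2 x y (fun u v => (u, v) : C) t _ _ (fun u v => (u, v) : C) Hx Hy).
  apply filterdiff_ext_lin with (fun p => p).
  - apply filterdiff_ext with (fun p => p); [now intros [] | apply filterdiff_id].
  - now intros [].
Qed.

Lemma is_derive_RtoC (h : R -> R) t h' :
  is_derive h t h' -> is_derive (fun s => RtoC (h s)) t (RtoC h').
Proof.
  intro Hh. apply is_derive_Cpair; [exact Hh | apply (is_derive_const (V := R_NormedModule))].
Qed.

Lemma is_derive_Rplus (f g : R -> R) t f' g' :
  is_derive f t f' -> is_derive g t g' -> is_derive (fun s => f s + g s) t (f' + g').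
Proof. apply (is_derive_plus f g). Qed.

Lemma is_derive_Rminus (f g : R -> R) t f' g' :
  is_derive f t f' -> is_derive g t g' -> is_derive (fun s => f s - g s) t (f' - g').
Proof. apply (is_derive_minus f g). Qed.

Lemma is_derive_Rpower r e : 0 < r -> is_derive (fun x => Rpower x e) r (e * Rpower r (e - 1)).
Proof. intro Hr. now apply is_derive_Reals, derivable_pt_lim_power. Qed.

Definition cis (a : R) : C := (cos a, sin a).

Lemma Cmod_cis a : Cmod (cis a) = 1.
Proof.
  unfold Cmod, cis; simpl fst; simpl snd.
  replace (cos a ^ 2 + sin a ^ 2) with 1 by (rewrite <- (sin2_cos2 a); unfold Rsqr; ring).
  apply sqrt_1.
Qed.

(* [gauged a x y t] is e^{i a (t - pi)} (x t + i y t), kept in real and imaginary parts so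
   that derivatives are taken componentwise. *)
Definition gauged (a : R) (x y : R -> R) (t : R) : C := (cis (a * (t - PI)) * (x t, y t))%C.

Lemma is_derive_gauged a (x y x' y' : R -> R) t :
  is_derive x t (x' t) -> is_derive y t (y' t) ->
  is_derive (gauged a x y) t (gauged a (fun s => x' s - a * y s) (fun s => y' s + a * x s) t).
Proof.
  intros Hx Hy. unfold gauged, cis, Cmult; simpl.
  replace (x' t) with (Derive (fun s => x s) t) by now apply is_derive_unique.
  replace (y' t) with (Derive (fun s => y s) t) by now apply is_derive_unique.
  apply is_derive_Cpair; auto_derive;
    first [repeat apply conj; try easy; eexists; eassumption | unfold Rminus; ring].
Qed.

Lemma Cmod_gauged a x y t : Cmod (gauged a x y t) ^ 2 = x t ^ 2 + y t ^ 2.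
Proof.
  unfold gauged. rewrite Cmod_mult, Cmod_cis, Rmult_1_l.
  unfold Cmod; simpl fst; simpl snd. apply pow2_sqrt. nra.
Qed.

Lemma gauged_eq_0 a x y t : gauged a x y t = 0 <-> x t = 0 /\ y t = 0.
Proof.
  split.
  - intro H. assert (Hmod := Cmod_gauged a x y t). rewrite H, Cmod_0 in Hmod.
    simpl in Hmod. nra.
  - intros [Hx Hy]. unfold gauged. rewrite Hx, Hy. apply Cmult_0_r.
Qed.

(* The phase absorbs the magnetic potential: (-i d/dt - a) (e^{i a (t - pi)} v)
   = e^{i a (t - pi)} (-i v'). *)
Lemma magnetic_gauged a (x y x' y' : R -> R) t :
  (- Ci * gauged a (fun s => x' s - a * y s)%R (fun s => y' s + a * x s)%R t
   - RtoC a * gauged a x y t)%C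
  = gauged a y' (fun s => - x' s) t.
Proof.
  unfold gauged, cis, Cmult, Cminus, Cplus, Copp, Ci, RtoC; simpl.
  apply injective_projections; simpl; ring.
Qed.

Lemma Re_conj_gauged a x y u v t :
  Re (Cconj (gauged a x y t) * gauged a u v t) = x t * u t + y t * v t.
Proof.
  unfold gauged, cis, Cconj, Cmult, Re; simpl.
  rewrite <- (Rmult_1_r (x t * u t + y t * v t)), <- (sin2_cos2 (a * (t - PI))).
  unfold Rsqr. ring.
Qed.

Lemma is_derive_atan_ratio (u v : R -> R) u' v' t :
  is_derive u t u' -> is_derive v t v' -> u t <> 0 ->
  is_derive (fun s => atan (v s / u s)) t ((u t * v' - v t * u') / (u t ^ 2 + v t ^ 2)).
Proof.
  intros Hu Hv Hu0.
  replace u' with (Derive (fun s => u s) t) by now apply is_derive_unique.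
  replace v' with (Derive (fun s => v s) t) by now apply is_derive_unique.
  auto_derive.
  - repeat apply conj; try easy; eexists; eassumption.
  - unfold Rsqr. field. split; [|exact Hu0].
    assert (0 < u t * u t) by nra. nra.
Qed.

Section Modes.

Variable m : R.

(* The solutions of u'' = -m^2 u with u(0) = 1 and u(2 pi) = 1, resp. -1. *)
Definition mode_even (t : R) : R := (sin (m * (2 * PI - t)) + sin (m * t)) / sin (2 * PI * m).
Definition mode_odd (t : R) : R := (sin (m * (2 * PI - t)) - sin (m * t)) / sin (2 * PI * m).
Definition mode_even' (t : R) : R := m * (cos (m * t) - cos (m * (2 * PI - t))) / sin (2 * PI * m).
Definition mode_odd' (t : R) : R := - m * (cos (m * (2 * PI - t)) + cos (m * t)) / sin (2 * PI * m).

Lemma sin_2PI_pos : 0 < m < 1 / 2 -> 0 < sin (2 * PI * m).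
Proof. intro Hm. assert (HPI := PI_RGT_0). apply sin_gt_0; nra. Qed.

Lemma mode_even_pos t : 0 < m < 1 / 2 -> 0 <= t <= 2 * PI -> 0 < mode_even t.
Proof.
  intros Hm Ht. assert (HPI := PI_RGT_0). unfold mode_even.
  apply Rdiv_lt_0_compat; [| now apply sin_2PI_pos].
  destruct (Req_dec t 0) as [-> | Ht0].
  - rewrite Rminus_0_r, Rmult_0_r, sin_0, (Rmult_comm m), Rplus_0_r. now apply sin_2PI_pos.
  - assert (0 < sin (m * t)) by (apply sin_gt_0; nra).
    assert (0 <= sin (m * (2 * PI - t))) by (apply sin_ge_0; nra).
    lra.
Qed.

Lemma mode_odd_eq_0 t : 0 < m < 1 / 2 -> 0 <= t <= 2 * PI -> mode_odd t = 0 <-> t = PI.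
Proof.
  intros Hm Ht. assert (HPI := PI_RGT_0).
  assert (Hcos : 0 < cos (m * PI)) by (apply cos_gt_0; nra).
  assert (Hsin_pos := sin_2PI_pos Hm).
  assert (Hodd : mode_odd t = 2 * cos (m * PI) / sin (2 * PI * m) * sin (m * (PI - t))).
  { unfold mode_odd. rewrite form4.
    replace ((m * (2 * PI - t) + m * t) / 2) with (m * PI) by field.
    replace ((m * (2 * PI - t) - m * t) / 2) with (m * (PI - t)) by field.
    field. lra. }
  assert (Hfactor : 0 < 2 * cos (m * PI) / sin (2 * PI * m)) by (apply Rdiv_lt_0_compat; lra).
  rewrite Hodd. split.
  - intro H0. destruct (Rtotal_order t PI) as [Hlt | [Heq | Hgt]]; [| exact Heq |].
    + assert (0 < sin (m * (PI - t))) by (apply sin_gt_0; nra). nra.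
    + assert (sin (m * (PI - t)) < 0) by (apply sin_lt_0_var; nra). nra.
  - intros ->. rewrite Rminus_diag, Rmult_0_r, sin_0. ring.
Qed.

Hypothesis Hsin : sin (2 * PI * m) <> 0.

Lemma is_derive_mode_even t : is_derive mode_even t (mode_even' t).
Proof. unfold mode_even, mode_even'. auto_derive; [easy | unfold Rminus; field; exact Hsin]. Qed.

Lemma is_derive_mode_odd t : is_derive mode_odd t (mode_odd' t).
Proof. unfold mode_odd, mode_odd'. auto_derive; [easy | unfold Rminus; field; exact Hsin]. Qed.

Lemma is_derive_mode_even' t : is_derive mode_even' t (- m ^ 2 * mode_even t).
Proof. unfold mode_even, mode_even'. auto_derive; [easy | unfold Rminus; field; exact Hsin]. Qed.

Lemma is_derive_mode_odd' t : is_derive mode_odd' t (- m ^ 2 * mode_odd t).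
Proof. unfold mode_odd, mode_odd'. auto_derive; [easy | unfold Rminus; field; exact Hsin]. Qed.

Lemma mode_even_0 : mode_even 0 = 1.
Proof.
  unfold mode_even. rewrite Rminus_0_r, Rmult_0_r, sin_0, (Rmult_comm m).
  field. exact Hsin.
Qed.

Lemma mode_odd_0 : mode_odd 0 = 1.
Proof.
  unfold mode_odd. rewrite Rminus_0_r, Rmult_0_r, sin_0, (Rmult_comm m).
  field. exact Hsin.
Qed.

Lemma mode_even_2PI : mode_even (2 * PI) = 1.
Proof.
  unfold mode_even. rewrite Rminus_diag, Rmult_0_r, sin_0, (Rmult_comm m).
  field. exact Hsin.
Qed.

Lemma mode_odd_2PI : mode_odd (2 * PI) = -1.
Proof.
  unfold mode_odd. rewrite Rminus_diag, Rmult_0_r, sin_0, (Rmult_comm m).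
  field. exact Hsin.
Qed.

Lemma mode_even'_2PI : mode_even' (2 * PI) = - mode_even' 0.
Proof. unfold mode_even'. rewrite Rminus_diag, Rminus_0_r, Rmult_0_r. field. exact Hsin. Qed.

Lemma mode_odd'_2PI : mode_odd' (2 * PI) = mode_odd' 0.
Proof. unfold mode_odd'. rewrite Rminus_diag, Rminus_0_r, Rmult_0_r. field. exact Hsin. Qed.

Lemma mode_wronskian t :
  mode_even t * mode_odd' t - mode_odd t * mode_even' t = - 2 * m / sin (2 * PI * m).
Proof.
  assert (Hsum : sin (2 * PI * m)
    = sin (m * (2 * PI - t)) * cos (m * t) + cos (m * (2 * PI - t)) * sin (m * t)).
  { rewrite <- sin_plus. f_equal. ring. }
  unfold mode_even, mode_odd, mode_even', mode_odd'.
  transitivity (- 2 * m * (sin (m * (2 * PI - t)) * cos (m * t)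
                           + cos (m * (2 * PI - t)) * sin (m * t)) / (sin (2 * PI * m))²).
  - unfold Rsqr. field. exact Hsin.
  - rewrite <- Hsum. unfold Rsqr. field. exact Hsin.
Qed.

End Modes.

Section Circle.

Variables alpha m : R.

Definition circle_mode : R -> C :=
  gauged alpha (fun t => cos (PI * alpha) * mode_even m t)
               (fun t => sin (PI * alpha) * mode_odd m t).

Definition circle_mode' : R -> C :=
  gauged alpha
    (fun t => cos (PI * alpha) * mode_even' m t - alpha * (sin (PI * alpha) * mode_odd m t))
    (fun t => sin (PI * alpha) * mode_odd' m t + alpha * (cos (PI * alpha) * mode_even m t)).

Definition circle_mode'' : R -> C :=
  gauged alpha
    (fun t => cos (PI * alpha) * (- m ^ 2 * mode_even m t)
              - alpha * (sin (PI * alpha) * mode_odd' m t)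
              - alpha * (sin (PI * alpha) * mode_odd' m t + alpha * (cos (PI * alpha) * mode_even m t)))
    (fun t => sin (PI * alpha) * (- m ^ 2 * mode_odd m t)
              + alpha * (cos (PI * alpha) * mode_even' m t)
              + alpha * (cos (PI * alpha) * mode_even' m t - alpha * (sin (PI * alpha) * mode_odd m t))).

Hypothesis Hsin : sin (2 * PI * m) <> 0.

Lemma is_derive_circle_mode t : is_derive circle_mode t (circle_mode' t).
Proof.
  apply is_derive_gauged; apply is_derive_scal;
    [apply is_derive_mode_even | apply is_derive_mode_odd]; exact Hsin.
Qed.

Lemma is_derive_circle_mode' t : is_derive circle_mode' t (circle_mode'' t).
Proof.
  apply is_derive_gauged.
  - apply is_derive_Rminus; [apply is_derive_scal, is_derive_mode_even'
                            | apply is_derive_scal, is_derive_scal, is_derive_mode_odd]; exact Hsin.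
  - apply is_derive_Rplus; [apply is_derive_scal, is_derive_mode_odd'
                           | apply is_derive_scal, is_derive_scal, is_derive_mode_even]; exact Hsin.
Qed.

Lemma circle_mode_eigen t :
  (- Ci * (- Ci * circle_mode'' t - RtoC alpha * circle_mode' t)
   - RtoC alpha * (- Ci * circle_mode' t - RtoC alpha * circle_mode t))%C
  = (RtoC (m ^ 2) * circle_mode t)%C.
Proof.
  unfold circle_mode'', circle_mode', circle_mode, gauged, cis.
  unfold Cmult, Cminus, Cplus, Copp, Ci, RtoC; simpl.
  apply injective_projections; simpl; ring.
Qed.

Lemma circle_mode_0 : circle_mode 0 = RtoC 1.
Proof.
  unfold circle_mode, gauged, cis. rewrite mode_even_0, mode_odd_0 by exact Hsin.
  replace (alpha * (0 - PI)) with (- (PI * alpha)) by ring. rewrite cos_neg, sin_neg.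
  unfold Cmult, RtoC; simpl. apply injective_projections; simpl; [|ring].
  assert (H := sin2_cos2 (PI * alpha)). unfold Rsqr in H. nra.
Qed.

Lemma circle_mode_2PI : circle_mode (2 * PI) = RtoC 1.
Proof.
  unfold circle_mode, gauged, cis. rewrite mode_even_2PI, mode_odd_2PI by exact Hsin.
  replace (alpha * (2 * PI - PI)) with (PI * alpha) by ring.
  unfold Cmult, RtoC; simpl. apply injective_projections; simpl; [|ring].
  assert (H := sin2_cos2 (PI * alpha)). unfold Rsqr in H. nra.
Qed.

Lemma circle_mode'_jump :
  (circle_mode' 0 - circle_mode' (2 * PI))%C
  = RtoC (2 * m * (cos (2 * PI * alpha) - cos (2 * PI * m)) / sin (2 * PI * m)).
Proof.
  unfold circle_mode', gauged, cis.
  rewrite mode_even'_2PI, mode_odd'_2PI, mode_even_0, mode_odd_0, mode_even_2PI, mode_odd_2PI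
    by exact Hsin.
  replace (alpha * (0 - PI)) with (- (PI * alpha)) by ring.
  replace (alpha * (2 * PI - PI)) with (PI * alpha) by ring.
  replace (2 * PI * alpha) with (2 * (PI * alpha)) by ring.
  rewrite cos_neg, sin_neg, cos_2a.
  unfold mode_even', mode_odd'. rewrite Rminus_0_r, Rmult_0_r, cos_0, (Rmult_comm m (2 * PI)).
  unfold Cmult, Cminus, Cplus, Copp, RtoC; simpl. apply injective_projections; simpl; [|ring].
  transitivity (2 * m / sin (2 * PI * m)
    * ((cos (PI * alpha) * cos (PI * alpha) - sin (PI * alpha) * sin (PI * alpha))
       - cos (2 * PI * m) * ((sin (PI * alpha))² + (cos (PI * alpha))²))).
  - unfold Rsqr. field. exact Hsin.
  - rewrite sin2_cos2. field. exact Hsin.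
Qed.

Lemma circle_current t :
  Re (Cconj (circle_mode t) * (- Ci * circle_mode' t - RtoC alpha * circle_mode t))
  = - m * sin (2 * PI * alpha) / sin (2 * PI * m).
Proof.
  unfold circle_mode', circle_mode. rewrite magnetic_gauged, Re_conj_gauged.
  transitivity (cos (PI * alpha) * sin (PI * alpha)
                * (mode_even m t * mode_odd' m t - mode_odd m t * mode_even' m t)); [ring|].
  rewrite mode_wronskian by exact Hsin.
  replace (2 * PI * alpha) with (2 * (PI * alpha)) by ring. rewrite sin_2a.
  field. exact Hsin.
Qed.

Hypothesis Hm : 0 < m < 1 / 2.

Lemma Cmod_circle_mode_pos t :
  0 < alpha < 1 / 2 -> 0 <= t <= 2 * PI -> 0 < Cmod (circle_mode t) ^ 2.
Proof.
  intros Halpha Ht. unfold circle_mode. rewrite Cmod_gauged.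
  assert (0 < cos (PI * alpha)) by (assert (HPI := PI_RGT_0); apply cos_gt_0; nra).
  assert (0 < cos (PI * alpha) * mode_even m t)
    by (apply Rmult_lt_0_compat; [lra | now apply mode_even_pos]).
  nra.
Qed.

Lemma circle_mode_neq_0 t : 0 < alpha < 1 / 2 -> 0 <= t <= 2 * PI -> circle_mode t <> 0.
Proof.
  intros Halpha Ht H. assert (Hpos := Cmod_circle_mode_pos t Halpha Ht).
  rewrite H, Cmod_0 in Hpos. lra.
Qed.

Lemma circle_mode_eq_0_half t :
  alpha = 1 / 2 -> 0 <= t <= 2 * PI -> circle_mode t = 0 <-> t = PI.
Proof.
  intros Halpha Ht. unfold circle_mode. rewrite gauged_eq_0, <- (mode_odd_eq_0 m t Hm Ht).
  replace (PI * alpha) with (PI / 2) by (rewrite Halpha; field). rewrite cos_PI2, sin_PI2. lra.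
Qed.

Definition circle_phase (t : R) : R :=
  atan (sin (PI * alpha) * mode_odd m t / (cos (PI * alpha) * mode_even m t)).

Lemma circle_phase_0 : 0 < alpha < 1 / 2 -> circle_phase 0 = PI * alpha.
Proof.
  intro Halpha. assert (HPI := PI_RGT_0). assert (0 < cos (PI * alpha)) by (apply cos_gt_0; nra).
  unfold circle_phase. rewrite mode_even_0, mode_odd_0 by exact Hsin.
  replace (_ / _) with (tan (PI * alpha)) by (unfold tan; field; lra).
  apply atan_tan. split; nra.
Qed.

Lemma circle_phase_2PI : 0 < alpha < 1 / 2 -> circle_phase (2 * PI) = - (PI * alpha).
Proof.
  intro Halpha. assert (HPI := PI_RGT_0). assert (0 < cos (PI * alpha)) by (apply cos_gt_0; nra).
  unfold circle_phase. rewrite mode_even_2PI, mode_odd_2PI by exact Hsin.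
  replace (_ / _) with (- tan (PI * alpha)) by (unfold tan; field; lra).
  rewrite atan_opp, atan_tan; [reflexivity | split; nra].
Qed.

Lemma is_derive_circle_phase t :
  0 < alpha < 1 / 2 -> 0 <= t <= 2 * PI ->
  is_derive circle_phase t
    (- m * sin (2 * PI * alpha) / sin (2 * PI * m) / Cmod (circle_mode t) ^ 2).
Proof.
  intros Halpha Ht. assert (HPI := PI_RGT_0).
  assert (Hpos := Cmod_circle_mode_pos t Halpha Ht).
  assert (Hc : 0 < cos (PI * alpha)) by (apply cos_gt_0; nra).
  assert (Hx : 0 < cos (PI * alpha) * mode_even m t)
    by (apply Rmult_lt_0_compat; [exact Hc | now apply mode_even_pos]).
  unfold circle_mode in *. rewrite Cmod_gauged in *.
  replace (- m * sin (2 * PI * alpha) / sin (2 * PI * m) / _) with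
    ((cos (PI * alpha) * mode_even m t * (sin (PI * alpha) * mode_odd' m t)
      - sin (PI * alpha) * mode_odd m t * (cos (PI * alpha) * mode_even' m t))
     / ((cos (PI * alpha) * mode_even m t) ^ 2 + (sin (PI * alpha) * mode_odd m t) ^ 2)).
  - apply (is_derive_atan_ratio (fun s => cos (PI * alpha) * mode_even m s)
                                 (fun s => sin (PI * alpha) * mode_odd m s)); [| | lra];
      apply is_derive_scal; [apply is_derive_mode_even | apply is_derive_mode_odd]; exact Hsin.
  - replace (2 * PI * alpha) with (2 * (PI * alpha)) by ring. rewrite sin_2a.
    transitivity (cos (PI * alpha) * sin (PI * alpha)
                  * (mode_even m t * mode_odd' m t - mode_odd m t * mode_even' m t)
                  / ((cos (PI * alpha) * mode_even m t) ^ 2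
                     + (sin (PI * alpha) * mode_odd m t) ^ 2)).
    + field. lra.
    + rewrite mode_wronskian by exact Hsin. field. lra.
Qed.

Lemma continuous_inv_Cmod_circle_mode t :
  0 < alpha < 1 / 2 -> 0 <= t <= 2 * PI -> continuous (fun t => / Cmod (circle_mode t) ^ 2) t.
Proof.
  intros Halpha Ht. assert (Hpos := Cmod_circle_mode_pos t Halpha Ht).
  unfold circle_mode in *. rewrite Cmod_gauged in Hpos.
  apply (continuous_ext (fun t => / ((cos (PI * alpha) * mode_even m t) ^ 2
                                     + (sin (PI * alpha) * mode_odd m t) ^ 2))).
  - intro u. now rewrite Cmod_gauged.
  - apply (ex_derive_continuous (V := R_NormedModule)). auto_derive.
    repeat split; try lra; eexists;
      [apply is_derive_mode_even | apply is_derive_mode_odd]; exact Hsin.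
Qed.

Lemma is_RInt_inv_Cmod_circle_mode :
  0 < alpha < 1 / 2 ->
  is_RInt (fun t => / Cmod (circle_mode t) ^ 2) 0 (2 * PI)
    (2 * PI * alpha / m * (sin (2 * PI * m) / sin (2 * PI * alpha))).
Proof.
  intro Halpha. assert (HPI := PI_RGT_0).
  assert (Hsin2 : 0 < sin (2 * PI * alpha)) by (apply sin_gt_0; nra).
  set (k := - sin (2 * PI * m) / (m * sin (2 * PI * alpha))).
  replace (2 * PI * alpha / m * (sin (2 * PI * m) / sin (2 * PI * alpha)))
    with (minus (k * circle_phase (2 * PI)) (k * circle_phase 0))
    by (rewrite circle_phase_2PI, circle_phase_0 by exact Halpha;
        unfold minus, plus, opp, k; simpl; field; lra).
  apply (is_RInt_derive (fun t => k * circle_phase t)); rewrite Rmin_left, Rmax_right by lra.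
  - intros t Ht. assert (Hpos := Cmod_circle_mode_pos t Halpha Ht).
    assert (Cmod (circle_mode t) <> 0) by (intro H; rewrite H in Hpos; simpl in Hpos; lra).
    replace (/ Cmod (circle_mode t) ^ 2)
      with (k * (- m * sin (2 * PI * alpha) / sin (2 * PI * m) / Cmod (circle_mode t) ^ 2))
      by (unfold k; field; repeat split; (lra || assumption)).
    now apply is_derive_scal, is_derive_circle_phase.
  - intros t Ht. now apply continuous_inv_Cmod_circle_mode.
Qed.

End Circle.

Section Ray.

Variable s : R.

Definition ray_mode (r : R) : C := RtoC (Rpower r s).
Definition ray_mode' (r : R) : C := RtoC (s * Rpower r (s - 1)).
Definition ray_mode'' (r : R) : C := RtoC (s * (s - 1) * Rpower r (s - 2)).

Lemma is_derive_ray_mode r : 0 < r -> is_derive ray_mode r (ray_mode' r).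
Proof. intro Hr. now apply is_derive_RtoC, is_derive_Rpower. Qed.

Lemma is_derive_ray_mode' r : 0 < r -> is_derive ray_mode' r (ray_mode'' r).
Proof.
  intro Hr. apply is_derive_RtoC.
  replace (s * (s - 1) * Rpower r (s - 2)) with (s * ((s - 1) * Rpower r (s - 1 - 1)))
    by (replace (s - 1 - 1) with (s - 2) by ring; ring).
  now apply is_derive_scal, is_derive_Rpower.
Qed.

Lemma ray_mode_eigen lam r :
  s * (s - 1) = - lam -> 0 < r -> (- ray_mode'' r)%C = (RtoC (lam / r ^ 2) * ray_mode r)%C.
Proof.
  intros Hs Hr.
  assert (Hpow : Rpower r s = Rpower r (s - 2) * r ^ 2).
  { rewrite <- (Rpower_pow 2 r Hr), <- Rpower_plus. f_equal. simpl. ring. }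
  unfold ray_mode'', ray_mode, RtoC, Cmult, Copp; simpl.
  rewrite Hpow. apply injective_projections; simpl; [|ring].
  rewrite Hs. field. lra.
Qed.

Lemma ray_mode_neq_0 r : ray_mode r <> 0.
Proof. unfold ray_mode, Rpower. intro H. injection H. apply Rgt_not_eq, exp_pos. Qed.

Lemma ray_mode_1 : ray_mode 1 = RtoC 1.
Proof. unfold ray_mode, Rpower. now rewrite ln_1, Rmult_0_r, exp_0. Qed.

Lemma ray_mode'_1 : ray_mode' 1 = RtoC s.
Proof. unfold ray_mode', Rpower. now rewrite ln_1, Rmult_0_r, exp_0, Rmult_1_r. Qed.

End Ray.

Lemma lambda_star_sqrt_bounds alpha lam :
  0 < alpha -> is_lambda_star alpha lam -> 0 < sqrt lam < alpha.
Proof.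
  intros Halpha [[Hlam Hlam_lt] _]. split.
  - now apply sqrt_lt_R0.
  - rewrite <- (sqrt_pow2 alpha) by lra. apply sqrt_lt_1; lra.
Qed.

Lemma euler_exponent lam :
  lam <= 1 / 4 ->
  (1 - sqrt (1 - 4 * lam)) / 2 * ((1 - sqrt (1 - 4 * lam)) / 2 - 1) = - lam.
Proof.
  intro Hlam. assert (Hd := sqrt_sqrt (1 - 4 * lam)).
  replace (_ * _) with ((sqrt (1 - 4 * lam) * sqrt (1 - 4 * lam) - 1) / 4) by field.
  rewrite Hd by lra. field.
Qed.

Lemma lambda_star_balance alpha lam :
  is_lambda_star alpha lam -> sin (2 * PI * sqrt lam) <> 0 ->
  2 * sqrt lam * (cos (2 * PI * alpha) - cos (2 * PI * sqrt lam)) / sin (2 * PI * sqrt lam)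
  + (1 - sqrt (1 - 4 * lam)) / 2 = 0.
Proof.
  intros [[Hlam _] Hchar] HS. assert (0 < sqrt lam) by now apply sqrt_lt_R0.
  rewrite Hchar. field. lra.
Qed.

Theorem lemma4p3 (alpha lam : R) (Halpha : 0 < alpha <= 1 / 2)
  (Hlam : is_lambda_star alpha lam) :
  exists (w1 dw1 ddw1 w2 dw2 ddw2 : R -> C),
    (forall t, 0 <= t <= 2 * PI -> is_derive w1 t (dw1 t)) /\
    (forall t, 0 < t < 2 * PI -> is_derive dw1 t (ddw1 t)) /\
    (forall r, 1 <= r -> is_derive w2 r (dw2 r)) /\
    (forall r, 1 < r -> is_derive dw2 r (ddw2 r)) /\
    ((exists t, 0 <= t <= 2 * PI /\ w1 t <> RtoC 0) \/
     (exists r, 1 <= r /\ w2 r <> RtoC 0)) /\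
    (forall t, 0 < t < 2 * PI ->
       ((- Ci) * ((- Ci) * ddw1 t - RtoC alpha * dw1 t)
        - RtoC alpha * ((- Ci) * dw1 t - RtoC alpha * w1 t))%C
       = (RtoC lam * w1 t)%C) /\
    (forall r, 1 < r -> (- ddw2 r)%C = (RtoC (lam / r ^ 2) * w2 r)%C) /\
    w1 0 = w1 (2 * PI) /\ w1 (2 * PI) = w2 1 /\
    (dw1 0 - dw1 (2 * PI)%R + dw2 1)%C = RtoC 0 /\
    (alpha < 1 / 2 ->
       (forall t, 0 <= t <= 2 * PI -> w1 t <> RtoC 0) /\
       (forall r, 1 <= r -> w2 r <> RtoC 0)) /\
    (alpha = 1 / 2 ->
       (forall t, 0 <= t <= 2 * PI -> (w1 t = RtoC 0 <-> t = PI)) /\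
       (forall r, 1 <= r -> w2 r <> RtoC 0)) /\
    (forall r, 1 <= r -> Im (w2 r) = 0) /\
    (forall t, 0 < t < 2 * PI ->
       Re (Cconj (w1 t) * ((- Ci) * dw1 t - RtoC alpha * w1 t))%C
       = - sqrt lam * sin (2 * PI * alpha) / sin (2 * PI * sqrt lam)) /\
    (alpha < 1 / 2 ->
       is_RInt (fun t => / (Cmod (w1 t)) ^ 2) 0 (2 * PI)
         (2 * PI * alpha / sqrt lam * (sin (2 * PI * sqrt lam) / sin (2 * PI * alpha)))).
Proof.
  assert (Hm := lambda_star_sqrt_bounds alpha lam (proj1 Halpha) Hlam).
  destruct (proj1 Hlam) as [Hlam_pos Hlam_lt].
  assert (HS : sin (2 * PI * sqrt lam) <> 0) by (apply Rgt_not_eq, sin_2PI_pos; lra).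
  assert (Hm2 : sqrt lam ^ 2 = lam) by (apply pow2_sqrt; lra).
  assert (Hs := euler_exponent lam ltac:(nra)).
  assert (Hbalance := lambda_star_balance alpha lam Hlam HS).
  set (m := sqrt lam) in *. set (s := (1 - sqrt (1 - 4 * lam)) / 2) in *.
  exists (circle_mode alpha m), (circle_mode' alpha m), (circle_mode'' alpha m),
    (ray_mode s), (ray_mode' s), (ray_mode'' s).
  repeat apply conj.
  - intros t _. now apply is_derive_circle_mode.
  - intros t _. now apply is_derive_circle_mode'.
  - intros r Hr. apply is_derive_ray_mode. lra.
  - intros r Hr. apply is_derive_ray_mode'. lra.
  - right. exists 1. split; [lra | apply ray_mode_neq_0].
  - intros t _. rewrite <- Hm2. apply circle_mode_eigen.
  - intros r Hr. apply ray_mode_eigen; [exact Hs | lra].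
  - now rewrite circle_mode_0, circle_mode_2PI.
  - now rewrite circle_mode_2PI, ray_mode_1.
  - rewrite circle_mode'_jump, ray_mode'_1, <- RtoC_plus by exact HS.
    now rewrite Hbalance.
  - intro Hlt. split; [intros t Ht; apply circle_mode_neq_0; lra | intros r _; apply ray_mode_neq_0].
  - intro Hhalf. split; [intros t Ht; apply circle_mode_eq_0_half; lra | intros r _; apply ray_mode_neq_0].
  - intros r _. reflexivity.
  - intros t _. now apply circle_current.
  - intro Hlt. apply is_RInt_inv_Cmod_circle_mode; lra.
Qed.
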